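(* Let $a_2,a_3$ be integers with $1<a_2<a_3$, $A=\{1,a_2,a_3\}$, and let $SG(A,n,p)$ be a stride generator. Then every break $y$ of $SG(A,n,p)$ satisfies $y\ge a_3-a_2$.
   Context: For integers $n$ and $i\ge 0$, an integer $x$ has an $n$-generation of order $i$ if there are integers $c_1,c_2\ge 0$ with $x+ia_3=c_2a_2+c_1$ and $c_1+c_2\le n+i$. For integers $n$ and $p\ge0$, $SG(A,n,p)$ is a stride generator if: (A) every integer $0\le x<a_3$ has an $n$-generation of some order $\le p$; (B) at least one integer $0\le x<a_3$ has no $n$-generation of order $<p$; (C) at least one integer $0\le y<a_3$ has no $(n-1)$-generation of any order $\le p+1$. Any integer $0\le y<a_3$ satisfying (C) is called a break. *)

From Stdlib Require Import ZArith Lia.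
Open Scope Z_scope.

Definition has_generation (a2 a3 n i x : Z) : Prop :=
  exists c1 c2 : Z, 0 <= c1 /\ 0 <= c2 /\
    x + i * a3 = c2 * a2 + c1 /\ c1 + c2 <= n + i.

Definition has_generation_le (a2 a3 n m x : Z) : Prop :=
  exists i, 0 <= i <= m /\ has_generation a2 a3 n i x.

Definition is_break (a2 a3 n p y : Z) : Prop :=
  0 <= y < a3 /\
  forall i, 0 <= i <= p + 1 -> ~ has_generation a2 a3 (n - 1) i y.

Definition stride_generator (a2 a3 n p : Z) : Prop :=
  0 <= p /\
  (forall x, 0 <= x < a3 -> has_generation_le a2 a3 n p x) /\
  (exists x, 0 <= x < a3 /\
     forall i, 0 <= i < p -> ~ has_generation a2 a3 n i x) /\
  (exists y, is_break a2 a3 n p y).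

(* If a break y were smaller than a3 - a2, then y + a2 would still lie in
   [0, a3) and so, by condition (A), have an n-generation of some order
   i <= p.  Removing one summand a2 from it (or, if it uses none, a2 >= 1
   summands 1) yields an (n-1)-generation of y of the same order,
   contradicting that y is a break. *)

From Stdlib Require Import ZArith Lia.
Open Scope Z_scope.

Lemma has_generation_subr_a2 (a2 a3 n i x : Z) :
  1 <= a2 -> 0 <= x + i * a3 ->
  has_generation a2 a3 n i (x + a2) -> has_generation a2 a3 (n - 1) i x.
Proof.
  intros Ha2 Hx [c1 [c2 [Hc1 [Hc2 [Hsum Hsize]]]]].
  destruct (Z_le_gt_dec 1 c2) as [Hc2pos | Hc2zero].
  - exists c1, (c2 - 1); repeat split; lia.
  - exists (c1 - a2), 0; repeat split; nia.
Qed.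

Theorem lemma1 (a2 a3 n p : Z) :
  1 < a2 < a3 ->
  stride_generator a2 a3 n p ->
  forall y : Z, is_break a2 a3 n p y -> a3 - a2 <= y.
Proof.
  intros Ha [_ [Hcover _]] y [Hy Hbreak].
  apply Z.nlt_ge; intros Hsmall.
  destruct (Hcover (y + a2)) as [i [Hi Hgen]]; [lia |].
  apply (Hbreak i); [lia |].
  apply has_generation_subr_a2; [lia | nia | exact Hgen].
Qed.
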